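(* Let $\psi_1\in \mathrm O(\Gamma\oplus U)$ act as the identity on $\Gamma$ and interchange $w$ and $w^*$. Let $$S=\{((P,\omega),B)\in \mathrm{Gr}^{\rm po}_{2,1}(\Gamma_{\mathbb R})\times\Gamma_{\mathbb R} : B\perp P,\ B\perp\omega,\ \omega^2\neq B^2\}.$$ For $((P,\omega),B)\in S$ put $c=\frac{2}{\omega^2-B^2}$. Then $((P,c\omega),cB)\in S$ and $$\psi_1(\gamma((P,\omega),B))=\gamma((P,c\omega),cB).$$
   Context: $\Gamma$ is a lattice of signature $(3,b-3)$. $(w,w^* )$ is a standard basis of the hyperbolic plane $U$ ($w^2={w^*}^2=0$, $\langle w,w^*\rangle=1$). $\mathrm{Gr}^{\rm po}_{2,1}(\Gamma_{\mathbb R})=\{(P,\omega): P$ an oriented positive definite plane in $\Gamma_{\mathbb R}$, $\omega\in P^\perp$, $\omega^2>0\}$. Isometries act on pairs $(H_1,H_2)$ of orthogonal oriented positive planes in $\Gamma_{\mathbb R}\oplus U_{\mathbb R}$ componentwise, transporting orientations. The map $\gamma$ sends $((P,\omega),B)$ to $(H_1,H_2)$ where: - $H_1=\{x-\langle x,B\rangle w: x\in P\}$, oriented via $P$; - $H_2$ has the ordered basis $\big(\tfrac12(\alpha-B^2)w+w^*+B,\ \omega-\langle\omega,B\rangle w\big)$, with $\alpha=\omega^2$. *)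

From HB Require Import structures.
From mathcomp Require Import all_boot all_order all_algebra.
From mathcomp Require Import reals.
Set Implicit Arguments. Unset Strict Implicit. Unset Printing Implicit Defensive.
Import Order.TTheory GRing.Theory Num.Theory.
Local Open Scope ring_scope.

(* Gamma is modelled as Z^b with Gram matrix G (integer, symmetric);
   Gamma_R = 'rV[R]_b with the R-bilinear extension of G. *)

Definition GR (R : realType) (b : nat) (G : 'M[int]_b) : 'M[R]_b :=
  map_mx (fun z : int => z%:~R) G.

Definition bil (R : realType) (b : nat) (G : 'M[int]_b) (x y : 'rV[R]_b) : R :=
  (x *m GR R G *m y^T) 0 0.

Definition lattice_sig (R : realType) (b : nat) (G : 'M[int]_b) : Prop :=
  (3 <= b)%N /\ G^T = G /\
  exists Q : 'M[R]_b, Q \in unitmx /\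
    Q *m GR R G *m Q^T = diag_mx (\row_(i < b) (if (i < 3)%N then 1 else -1)).

(* Vectors of Gamma_R (+) U_R:  mkLU x s t  stands for  x + s w + t w^*. *)
Record LU (R : realType) (b : nat) := mkLU { lg : 'rV[R]_b ; lw : R ; lws : R }.

Definition lin (R : realType) (b : nat) (a : R) (u : LU R b) (c : R) (v : LU R b) : LU R b :=
  mkLU (a *: lg u + c *: lg v) (a * lw u + c * lw v) (a * lws u + c * lws v).

(* An oriented plane is given by an ordered basis (u1,u2).  Two ordered bases
   define the same oriented plane iff they differ by a change of basis matrix
   of positive determinant. *)
Definition same_oplane (R : realType) (b : nat) (u v : LU R b * LU R b) : Prop :=
  exists a11 a12 a21 a22 : R, 0 < a11 * a22 - a12 * a21 /\
    v.1 = lin a11 u.1 a12 u.2 /\ v.2 = lin a21 u.1 a22 u.2.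

Definition same_pair (R : realType) (b : nat)
  (H K : (LU R b * LU R b) * (LU R b * LU R b)) : Prop :=
  same_oplane H.1 K.1 /\ same_oplane H.2 K.2.

(* ((P,omega)) in Gr^po_{2,1}, P given by an oriented basis (p1,p2):
   P positive definite (Gram matrix of (p1,p2) positive definite),
   omega in P^perp, omega^2 > 0. *)
Definition in_Grpo (R : realType) (b : nat) (G : 'M[int]_b)
  (p1 p2 om : 'rV[R]_b) : Prop :=
  0 < bil G p1 p1 /\ 0 < bil G p1 p1 * bil G p2 p2 - bil G p1 p2 ^+ 2 /\
  bil G om p1 = 0 /\ bil G om p2 = 0 /\ 0 < bil G om om.

Definition in_S (R : realType) (b : nat) (G : 'M[int]_b)
  (p1 p2 om B : 'rV[R]_b) : Prop :=
  in_Grpo G p1 p2 om /\ bil G B p1 = 0 /\ bil G B p2 = 0 /\ bil G B om = 0 /\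
  bil G om om <> bil G B B.

Definition gamma (R : realType) (b : nat) (G : 'M[int]_b)
  (p1 p2 om B : 'rV[R]_b) : (LU R b * LU R b) * (LU R b * LU R b) :=
  let alpha := bil G om om in
  ((mkLU p1 (- bil G p1 B) 0, mkLU p2 (- bil G p2 B) 0),
   (mkLU B ((alpha - bil G B B) / 2) 1, mkLU om (- bil G om B) 0)).

Definition psi1 (R : realType) (b : nat) (v : LU R b) : LU R b :=
  mkLU (lg v) (lws v) (lw v).

Definition psi1_pair (R : realType) (b : nat)
  (H : (LU R b * LU R b) * (LU R b * LU R b)) :=
  ((psi1 H.1.1, psi1 H.1.2), (psi1 H.2.1, psi1 H.2.2)).

From HB Require Import structures.
From mathcomp Require Import all_boot all_order all_algebra.
From mathcomp Require Import reals.
From mathcomp Require Import ring lra.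
Set Implicit Arguments. Unset Strict Implicit. Unset Printing Implicit Defensive.
Import Order.TTheory GRing.Theory Num.Theory.
Local Open Scope ring_scope.

(* When B is orthogonal to P and omega, the correction terms -<x,B> w in gamma
   vanish, so H1 = P and H2 has basis (B + (alpha - B^2)/2 w + w^*, omega).
   With c = 2/(alpha - B^2), psi_1 sends the first vector to B + w + (1/c) w^*,
   and c times it is cB + c w + w^*, the first basis vector of
   gamma((P, c omega), cB), whose second one is c omega.  So psi_1 fixes H1 and
   rescales the basis of H2 by c, which preserves its orientation. *)

Section Bilinear.

Variables (R : realType) (b : nat) (G : 'M[int]_b).

Lemma bilZl (c : R) (x y : 'rV[R]_b) : bil G (c *: x) y = c * bil G x y.
Proof. by rewrite /bil -!scalemxAl mxE. Qed.

Lemma bilZr (c : R) (x y : 'rV[R]_b) : bil G x (c *: y) = c * bil G x y.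
Proof. by rewrite /bil linearZ /= -scalemxAr mxE. Qed.

Lemma bilC (x y : 'rV[R]_b) : G^T = G -> bil G x y = bil G y x.
Proof.
move=> sG; rewrite /bil [LHS](_ : _ = ((x *m GR R G *m y^T)^T) 0 0).
  by rewrite !trmx_mul trmxK mulmxA /GR map_trmx sG.
by rewrite [in RHS]mxE.
Qed.

Lemma in_S_scale (c : R) (p1 p2 om B : 'rV[R]_b) :
  c != 0 -> in_S G p1 p2 om B -> in_S G p1 p2 (c *: om) (c *: B).
Proof.
move=> cn0 [[h1 [h2 [h3 [h4 h5]]]] [h6 [h7 [h8 h9]]]].
rewrite /in_S /in_Grpo !bilZl !bilZr h3 h4 h6 h7 h8 !mulr0; do !split => //.
  by rewrite mulrA pmulr_rgt0 // lt_def mulf_neq0 //= -expr2 sqr_ge0.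
by move=> /(mulfI cn0) /(mulfI cn0).
Qed.

Lemma gamma_in_S (p1 p2 om B : 'rV[R]_b) : G^T = G -> in_S G p1 p2 om B ->
  gamma G p1 p2 om B =
  ((mkLU p1 0 0, mkLU p2 0 0),
   (mkLU B ((bil G om om - bil G B B) / 2) 1, mkLU om 0 0)).
Proof.
move=> sG [_ [Bp1 [Bp2 [Bom _]]]].
by rewrite /gamma (bilC p1) // (bilC p2) // (bilC om) // Bp1 Bp2 Bom oppr0.
Qed.

End Bilinear.

Definition scaleLU (R : realType) (b : nat) (c : R) (u : LU R b) : LU R b :=
  mkLU (c *: lg u) (c * lw u) (c * lws u).

Lemma same_oplane_refl (R : realType) (b : nat) (u : LU R b * LU R b) :
  same_oplane u u.
Proof.
case: u => u1 u2; exists 1, 0, 0, 1; split; first lra.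
by rewrite /lin /= !scale1r !scale0r !mul1r !mul0r !addr0 !add0r; case: u1; case: u2.
Qed.

Lemma same_oplane_scale (R : realType) (b : nat) (c : R) (u1 u2 : LU R b) :
  c != 0 -> same_oplane (u1, u2) (scaleLU c u1, scaleLU c u2).
Proof.
move=> cn0; exists c, 0, 0, c; split.
  by rewrite mulr0 subr0 lt_def mulf_neq0 //= -expr2 sqr_ge0.
by rewrite /lin /scaleLU /= !scale0r !mul0r !addr0 !add0r.
Qed.

Theorem mainTheorem12 (R : realType) (b : nat) (G : 'M[int]_b) :
  lattice_sig R G ->
  forall p1 p2 om B : 'rV[R]_b,
    in_S G p1 p2 om B ->
    let c := 2 / (bil G om om - bil G B B) in
    in_S G p1 p2 (c *: om) (c *: B) /\
    same_pair (psi1_pair (gamma G p1 p2 om B)) (gamma G p1 p2 (c *: om) (c *: B)).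
Proof.
move=> [_ [sG _]] p1 p2 om B hS c.
have dn0 : bil G om om - bil G B B != 0.
  by case: hS => _ [_ [_ [_ neq]]]; rewrite subr_eq0; apply/eqP.
have cn0 : c != 0 by rewrite mulf_neq0 // ?invr_eq0 // pnatr_eq0.
have hS' := in_S_scale cn0 hS.
split => //.
rewrite (gamma_in_S sG hS) (gamma_in_S sG hS'); split; first exact: same_oplane_refl.
have -> : mkLU (c *: B) ((bil G (c *: om) (c *: om) - bil G (c *: B) (c *: B)) / 2) 1
          = scaleLU c (mkLU B 1 ((bil G om om - bil G B B) / 2)).
  by rewrite /scaleLU /= !bilZl !bilZr; congr mkLU; rewrite /c; field.
have -> : mkLU (c *: om) 0 0 = scaleLU c (mkLU om 0 0) by rewrite /scaleLU /= mulr0.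
exact: same_oplane_scale.
Qed.
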